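(* Let $c^{(k)}$ be an admissible control and $\rho^{(k)}$ the corresponding solution of the master equation. Let $c^{(k+1)}=(u^{(k+1)},n_1^{(k+1)},n_2^{(k+1)})$ be an admissible control and $\chi^{(k+1)}$ the solution of the adjoint system with control $c^{(k+1)}$ such that for every $t\in[0,T]$: $u^{(k+1)}(t)\in\arg\max_{|u|\le\mu}\mathcal K^u(\chi^{(k+1)}(t),\rho^{(k)}(t))\,u$ and $n_j^{(k+1)}(t)\in\arg\max_{n_j\in[0,n_{\max}]}\mathcal K^{n_j}(\chi^{(k+1)}(t),\rho^{(k)}(t))\,n_j$, $j=1,2$. Then $\langle\mathcal K^c(\chi^{(k+1)}(t),\rho^{(k)}(t)),c^{(k+1)}(t)-c^{(k)}(t)\rangle\ge0$ for all $t\in[0,T]$ and $J_1(c^{(k+1)})\ge J_1(c^{(k)})$. Moreover $J_1(c^{(k+1)})>J_1(c^{(k)})$ if at least one of the sets $\{t: u^{(k+1)}(t)\ne u^{(k)}(t),\ \mathcal K^u(\chi^{(k+1)}(t),\rho^{(k)}(t))\ne0\}$, $\{t: n_j^{(k+1)}(t)\ne n_j^{(k)}(t),\ \mathcal K^{n_j}(\chi^{(k+1)}(t),\rho^{(k)}(t))\ne0\}$ ($j=1,2$) has positive Lebesgue measure.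
   Context: Let $\sigma_x,\sigma_y,\sigma_z$ be the Pauli matrices, $\mathbb I_2,\mathbb I_4$ identity matrices, $\sigma^+=\begin{pmatrix}0&0\\1&0\end{pmatrix}$, $\sigma^-=\begin{pmatrix}0&1\\0&0\end{pmatrix}$, $\sigma_1^\pm=\sigma^\pm\otimes\mathbb I_2$, $\sigma_2^\pm=\mathbb I_2\otimes\sigma^\pm$, $W_1=\sigma_z\otimes\mathbb I_2$, $W_2=\mathbb I_2\otimes\sigma_z$. Fix parameters $\varepsilon,\omega_j,\Lambda_j,\Omega_j>0$ ($j=1,2$), $H_0=\frac{\omega_1}{2}W_1+\frac{\omega_2}{2}W_2$, and a Hermitian $4\times4$ matrix $V$ (in the paper $V=Q_1\otimes\mathbb I_2+\mathbb I_2\otimes Q_2$ or $V=Q_1\otimes Q_2$ with $Q_j=\sin\theta_j\cos\varphi_j\sigma_x+\sin\theta_j\sin\varphi_j\sigma_y+\cos\theta_j\sigma_z$). For $c=(u,n_1,n_2)\in\mathbb R^3$ let $H_c=H_0+\varepsilon\sum_{j=1}^2\Lambda_j n_jW_j+uV$ and $$\mathcal L^D_n(\rho)=\sum_{j=1}^2\Big[\Omega_j(n_j+1)\big(2\sigma_j^-\rho\sigma_j^+-\{\sigma_j^+\sigma_j^-,\rho\}\big)+\Omega_jn_j\big(2\sigma_j^+\rho\sigma_j^--\{\sigma_j^-\sigma_j^+,\rho\}\big)\Big],$$ $$\mathcal L^{D,\dagger}_n(\chi)=\sum_{j=1}^2\Big[\Omega_j(n_j+1)\big(2\sigma_j^+\chi\sigma_j^--\{\sigma_j^+\sigma_j^-,\chi\}\big)+\Omega_jn_j\big(2\sigma_j^-\chi\sigma_j^+-\{\sigma_j^-\sigma_j^+,\chi\}\big)\Big],$$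 where $\{A,B\}=AB+BA$, $[A,B]=AB-BA$. Fix $T>0$, $\mu,n_{\max}>0$, $Q=[-\mu,\mu]\times[0,n_{\max}]^2$; admissible controls are piecewise continuous $c=(u,n_1,n_2):[0,T]\to Q$. Fix density matrices $\rho_0,\rho_{\rm target}$ ($4\times 4$, positive semidefinite, trace one). The master equation is $\dot\rho(t)=-i[H_{c(t)},\rho(t)]+\varepsilon\mathcal L^D_{n(t)}(\rho(t))$, $\rho(0)=\rho_0$; the adjoint system is $\dot\chi(t)=-i[H_{c(t)},\chi(t)]-\varepsilon\mathcal L^{D,\dagger}_{n(t)}(\chi(t))$, $\chi(T)=\rho_{\rm target}$ (solved backward). For matrices, $\langle A,B\rangle={\rm Tr}(A^\dagger B)$. The objective is $J_1(c)={\rm Tr}(\rho(T)\rho_{\rm target})$ where $\rho$ solves the master equation with control $c$. The switching functions $\mathcal K^c=(\mathcal K^u,\mathcal K^{n_1},\mathcal K^{n_2})$ are the coefficients of $u,n_1,n_2$ in $\langle\chi,-i[H_c,\rho]+\varepsilon\mathcal L^D_n(\rho)\rangle$: $\mathcal K^u(\chi,\rho)=\langle\chi,-i[V,\rho]\rangle$, $\mathcal K^{n_j}(\chi,\rho)=\big\langle\chi,-i\varepsilon\Lambda_j[W_j,\rho]+\varepsilon\Omega_j\big(2\sigma_j^-\rho\sigma_j^++2\sigma_j^+\rho\sigma_j^--2\rho\big)\big\rangle$, $j=1,2$ (real for Hermitian $\chi,\rho$). *)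

From HB Require Import structures.
From mathcomp Require Import all_boot all_order all_algebra.
From mathcomp Require Import all_classical all_reals all_analysis.
From mathcomp Require Import complex mxtens.

Set Implicit Arguments.
Unset Strict Implicit.
Unset Printing Implicit Defensive.

Import Order.TTheory GRing.Theory Num.Theory.
Import numFieldNormedType.Exports.
Local Open Scope classical_set_scope.
Local Open Scope ring_scope.

Section Model.
Variable R : realType.
Local Notation C := (R[i]).
Local Notation M4 := ('M[C]_(4, 4)).

Definition iC : C := Complex 0 1.
Definition rC (x : R) : C := Complex x 0.

Definition adj4 (A : M4) : M4 := (map_mx Num.conj A)^T.

Definition hermitian4 (A : M4) : Prop := adj4 A = A.

Definition density (A : M4) : Prop :=
  [/\ hermitian4 A,
      (forall v : 'cV[C]_4, 0 <= ((map_mx Num.conj v)^T *m A *m v) 0 0)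
    & \tr A = 1].

Definition hs (A B : M4) : C := \tr (adj4 A *m B).

Definition comm (A B : M4) : M4 := A *m B - B *m A.
Definition acomm (A B : M4) : M4 := A *m B + B *m A.

Definition sig_plus : 'M[C]_(2, 2) :=
  \matrix_(i < 2, j < 2) (if (i == 1 :> nat) && (j == 0 :> nat) then 1 else 0).
Definition sig_minus : 'M[C]_(2, 2) :=
  \matrix_(i < 2, j < 2) (if (i == 0 :> nat) && (j == 1 :> nat) then 1 else 0).
Definition sig_z : 'M[C]_(2, 2) :=
  \matrix_(i < 2, j < 2)
    (if i == j then (if i == 0 :> nat then 1 else -1) else 0).

Definition kron2 (A B : 'M[C]_(2, 2)) : M4 := A *t B.

(* index j : 'I_2 ; j = 0 stands for the paper's j = 1, j = 1 for j = 2 *)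
Definition sp (j : 'I_2) : M4 :=
  if j == 0 :> nat then kron2 sig_plus 1%:M else kron2 1%:M sig_plus.
Definition sm (j : 'I_2) : M4 :=
  if j == 0 :> nat then kron2 sig_minus 1%:M else kron2 1%:M sig_minus.
Definition Wm (j : 'I_2) : M4 :=
  if j == 0 :> nat then kron2 sig_z 1%:M else kron2 1%:M sig_z.

Variables (eps : R) (om La Om : 'I_2 -> R) (V : M4).

Definition H0 : M4 := \sum_(j < 2) rC (om j / 2) *: Wm j.

Definition Hc (u : R) (n : 'I_2 -> R) : M4 :=
  H0 + \sum_(j < 2) rC (eps * La j * n j) *: Wm j + rC u *: V.

Definition LD (n : 'I_2 -> R) (rho : M4) : M4 :=
  \sum_(j < 2)
    (rC (Om j * (n j + 1)) *:
       (2%:R *: (sm j *m rho *m sp j) - acomm (sp j *m sm j) rho)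
   + rC (Om j * n j) *:
       (2%:R *: (sp j *m rho *m sm j) - acomm (sm j *m sp j) rho)).

Definition LDdag (n : 'I_2 -> R) (chi : M4) : M4 :=
  \sum_(j < 2)
    (rC (Om j * (n j + 1)) *:
       (2%:R *: (sp j *m chi *m sm j) - acomm (sp j *m sm j) chi)
   + rC (Om j * n j) *:
       (2%:R *: (sm j *m chi *m sp j) - acomm (sm j *m sp j) chi)).

Definition master_rhs (u : R) (n : 'I_2 -> R) (rho : M4) : M4 :=
  (- iC) *: comm (Hc u n) rho + rC eps *: LD n rho.
Definition adjoint_rhs (u : R) (n : 'I_2 -> R) (chi : M4) : M4 :=
  (- iC) *: comm (Hc u n) chi - rC eps *: LDdag n chi.

(* switching functions (real parts; they are real for Hermitian chi, rho) *)
Definition Ku (chi rho : M4) : R :=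
  complex.Re (hs chi ((- iC) *: comm V rho)).
Definition Kn (j : 'I_2) (chi rho : M4) : R :=
  complex.Re (hs chi
    ((- iC) *: (rC (eps * La j) *: comm (Wm j) rho)
     + rC (eps * Om j) *:
         (2%:R *: (sm j *m rho *m sp j) + 2%:R *: (sp j *m rho *m sm j)
          - 2%:R *: rho))).

End Model.

Section Analysis.
Variable R : realType.
Local Notation C := (R[i]).
Local Notation M4 := ('M[C]_(4, 4)).

Definition piecewise_continuous (T : R) (f : R -> R) : Prop :=
  exists (m : nat) (p : nat -> R),
    [/\ p 0%N = 0, p m = T,
        (forall k, (k < m)%N -> p k < p k.+1)
      & forall k, (k < m)%N ->
          [/\ {within `]p k, p k.+1[, continuous f},
              (exists l : R, f x @[x --> (p k)^'+] --> l)
            & (exists l : R, f x @[x --> (p k.+1)^'-] --> l)]].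

Definition admissible (T mu nmax : R) (u : R -> R) (n : 'I_2 -> R -> R)
  : Prop :=
  [/\ piecewise_continuous T u,
      (forall j, piecewise_continuous T (n j))
    & forall t, 0 <= t <= T ->
        `|u t| <= mu /\ forall j, 0 <= n j t <= nmax].

(* X : R -> M4 solves X' = F t X on [0,T]: entrywise (real and imaginary
   parts) continuous on [0,T] and differentiable with the prescribed
   derivative at every t in ]0,T[ except at finitely many points (the
   switching points of the piecewise continuous control). *)
Definition solves_on (T : R) (F : R -> M4 -> M4) (X : R -> M4) : Prop :=
  (forall i j,
     {within `[0, T], continuous (fun t => complex.Re (X t i j))} /\
     {within `[0, T], continuous (fun t => complex.Im (X t i j))}) /\
  exists Z : set R, finite_set Z /\
    forall t, 0 < t < T -> ~ Z t -> forall i j,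
      is_derive t (1 : R) (fun s => complex.Re (X s i j))
                          (complex.Re (F t (X t) i j)) /\
      is_derive t (1 : R) (fun s => complex.Im (X s i j))
                          (complex.Im (F t (X t) i j)).

Definition master_solution (eps : R) (om La Om : 'I_2 -> R) (V : M4)
  (T : R) (rho0 : M4) (u : R -> R) (n : 'I_2 -> R -> R) (rho : R -> M4)
  : Prop :=
  rho 0 = rho0 /\
  solves_on T (fun t X => master_rhs eps om La Om V (u t) (fun j => n j t) X)
    rho.

Definition adjoint_solution (eps : R) (om La Om : 'I_2 -> R) (V : M4)
  (T : R) (rhotarget : M4) (u : R -> R) (n : 'I_2 -> R -> R) (chi : R -> M4)
  : Prop :=
  chi T = rhotarget /\
  solves_on T (fun t X => adjoint_rhs eps om La Om V (u t) (fun j => n j t) X)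
    chi.

(* J_1(c) = Tr(rho(T) rho_target), rho the solution with control c
   (real, since both matrices are Hermitian) *)
Definition J1 (T : R) (rhotarget : M4) (rho : R -> M4) : R :=
  complex.Re (\tr (rho T *m rhotarget)).

Definition argmax_on (A : set R) (f : R -> R) : set R :=
  [set x | A x /\ forall y, A y -> f y <= f x].

End Analysis.

(* Put f t := Re <chi(t), rho'(t) - rho(t)>, where chi = chi^(k+1), rho = rho^(k)
   and rho' = rho^(k+1).  Then f 0 = 0 and f T = J_1(c^(k+1)) - J_1(c^(k)).
   The adjoint generator is the Hilbert-Schmidt adjoint of the master generator
   for the same control, and the master generator is affine in the control with
   the switching functions as coefficients; hence, away from the finitely many
   switching points, f' t = <K^c(chi t, rho t), c^(k+1) t - c^(k) t>, which is
   nonnegative because c^(k+1) t maximizes K^c . c pointwise.  So f is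
   nondecreasing.  If J_1 does not increase, f is constant, f' vanishes off a
   finite set, and every set on which f' is positive is Lebesgue-null. *)

From HB Require Import structures.
From mathcomp Require Import all_boot all_order all_algebra.
From mathcomp Require Import all_classical all_reals all_analysis.
From mathcomp Require Import complex mxtens.
From mathcomp Require Import ring.

Set Implicit Arguments.
Unset Strict Implicit.
Unset Printing Implicit Defensive.

Import Order.TTheory GRing.Theory Num.Theory.
Import numFieldNormedType.Exports.
Local Open Scope classical_set_scope.
Local Open Scope ring_scope.

Section ComplexScalars.
Variable R : realType.
Local Notation C := R[i].
Implicit Types (x y : C).

Lemma rCE (a : R) : rC a = a%:C%C.
Proof. by []. Qed.

Lemma conj_rC (a : R) : Num.conj (rC a) = rC a.
Proof. exact: conjc_real. Qed.

Lemma conj_NiC : Num.conj (- iC R) = iC R.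
Proof. by apply/eqP; rewrite eq_complex /= opprK oppr0 !eqxx. Qed.

Lemma rCB_mul (a1 a0 b : R) : rC (a1 * b) - rC (a0 * b) = rC (a1 - a0) * rC b.
Proof. by rewrite !rCE -rmorphB -rmorphM mulrBl. Qed.

Lemma ReD x y : complex.Re (x + y) = complex.Re x + complex.Re y.
Proof. by case: x; case: y. Qed.

Lemma ReB x y : complex.Re (x - y) = complex.Re x - complex.Re y.
Proof. by case: x; case: y. Qed.

Lemma ImB x y : complex.Im (x - y) = complex.Im x - complex.Im y.
Proof. by case: x; case: y. Qed.

Lemma Re_sum I r (P : pred I) (F : I -> C) :
  complex.Re (\sum_(i <- r | P i) F i) = \sum_(i <- r | P i) complex.Re (F i).
Proof. exact: (big_morph _ ReD). Qed.

Lemma Re_rCM (a : R) x : complex.Re (rC a * x) = a * complex.Re x.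
Proof. by case: x => p q /=; rewrite mul0r subr0. Qed.

Lemma Re_conjM x y :
  complex.Re (Num.conj x * y) =
  complex.Re x * complex.Re y + complex.Im x * complex.Im y.
Proof. by case: x => a b; case: y => c d /=; ring. Qed.

End ComplexScalars.

Section HilbertSchmidt.
Variable R : realType.
Local Notation C := R[i].
Local Notation M4 := 'M[C]_(4, 4).
Implicit Types (A B H L X Y : M4) (c : C).

Lemma adj4_is_zmod_morphism : zmod_morphism (@adj4 R).
Proof. by move=> A B; rewrite /adj4 map_mxB linearB. Qed.

HB.instance Definition _ :=
  GRing.isZmodMorphism.Build M4 M4 (@adj4 R) adj4_is_zmod_morphism.

Lemma adj4Z c A : adj4 (c *: A) = Num.conj c *: adj4 A.
Proof. by rewrite /adj4 map_mxZ linearZ. Qed.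

Lemma adj4M A B : adj4 (A *m B) = adj4 B *m adj4 A.
Proof. by rewrite /adj4 map_mxM trmx_mul. Qed.

Lemma adj4K : involutive (@adj4 R).
Proof. by move=> A; apply/matrixP => i j; rewrite !mxE conjCK. Qed.

Lemma hsDr X A B : hs X (A + B) = hs X A + hs X B.
Proof. by rewrite /hs mulmxDr mxtraceD. Qed.

Lemma hsBr X A B : hs X (A - B) = hs X A - hs X B.
Proof. by rewrite /hs mulmxBr raddfB. Qed.

Lemma hsZr c X A : hs X (c *: A) = c * hs X A.
Proof. by rewrite /hs -scalemxAr mxtraceZ. Qed.

Lemma hs_sumr I r (P : pred I) (F : I -> M4) X :
  hs X (\sum_(i <- r | P i) F i) = \sum_(i <- r | P i) hs X (F i).
Proof. by rewrite /hs mulmx_sumr raddf_sum. Qed.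

Lemma hsDl A B Y : hs (A + B) Y = hs A Y + hs B Y.
Proof. by rewrite /hs raddfD /= mulmxDl mxtraceD. Qed.

Lemma hsBl A B Y : hs (A - B) Y = hs A Y - hs B Y.
Proof. by rewrite /hs raddfB /= mulmxBl raddfB. Qed.

Lemma hsZl c A Y : hs (c *: A) Y = Num.conj c * hs A Y.
Proof. by rewrite /hs adj4Z -scalemxAl mxtraceZ. Qed.

Lemma hs_suml I r (P : pred I) (F : I -> M4) Y :
  hs (\sum_(i <- r | P i) F i) Y = \sum_(i <- r | P i) hs (F i) Y.
Proof. by rewrite /hs raddf_sum /= mulmx_suml raddf_sum. Qed.

Lemma commDl A B Y : comm (A + B) Y = comm A Y + comm B Y.
Proof. by rewrite /comm mulmxDl mulmxDr opprD addrACA. Qed.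

Lemma commBl A B Y : comm (A - B) Y = comm A Y - comm B Y.
Proof.
rewrite /comm mulmxBl mulmxBr !opprB addrACA [RHS]addrACA.
by rewrite [- (Y *m A) + _]addrC.
Qed.

Lemma commZl c A Y : comm (c *: A) Y = c *: comm A Y.
Proof. by rewrite /comm -scalemxAl -scalemxAr scalerBr. Qed.

Lemma comm_suml I r (P : pred I) (F : I -> M4) Y :
  comm (\sum_(i <- r | P i) F i) Y = \sum_(i <- r | P i) comm (F i) Y.
Proof. by rewrite /comm mulmx_suml mulmx_sumr -sumrB. Qed.

Lemma hs_commL H X Y : hermitian4 H -> hs (comm H X) Y = hs X (comm H Y).
Proof.
move=> hH; rewrite /hs /comm raddfB /= !adj4M hH mulmxBl mulmxBr !raddfB /=.
by rewrite -!mulmxA [\tr (H *m _)]mxtrace_mulC -!mulmxA.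
Qed.

Lemma hs_acommL H X Y : hermitian4 H -> hs (acomm H X) Y = hs X (acomm H Y).
Proof.
move=> hH; rewrite /hs /acomm raddfD /= !adj4M hH mulmxDl mulmxDr !mxtraceD.
by rewrite -!mulmxA [\tr (H *m _)]mxtrace_mulC -!mulmxA addrC.
Qed.

Lemma Re_hs_hermitianB Q A B : hermitian4 Q ->
  complex.Re (hs Q (A - B)) =
  complex.Re (\tr (A *m Q)) - complex.Re (\tr (B *m Q)).
Proof.
by move=> hQ; rewrite hsBr ReB /hs hQ !(mxtrace_mulC Q).
Qed.

Lemma hs_sandwichL P Q X Y : hs (P *m X *m Q) Y = hs X (adj4 P *m Y *m adj4 Q).
Proof. by rewrite /hs !adj4M -!mulmxA mxtrace_mulC !mulmxA. Qed.

Lemma hs_dissipator_adjoint L X Y :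
  hs (2%:R *: (adj4 L *m X *m L) - acomm (adj4 L *m L) X) Y =
  hs X (2%:R *: (L *m Y *m adj4 L) - acomm (adj4 L *m L) Y).
Proof.
have hLL : hermitian4 (adj4 L *m L) by rewrite /hermitian4 adj4M adj4K.
rewrite hsBl hsZl conjC_nat hs_sandwichL adj4K hs_acommL //.
by rewrite hsBr hsZr.
Qed.

Lemma hs_adjoint_combination (a b : R) A1 A2 B1 B2 X Y :
  hs A1 Y = hs X B1 -> hs A2 Y = hs X B2 ->
  hs (rC a *: A1 + rC b *: A2) Y = hs X (rC a *: B1 + rC b *: B2).
Proof. by move=> e1 e2; rewrite hsDl !hsZl !conj_rC e1 e2 hsDr !hsZr. Qed.

End HilbertSchmidt.

Section Ladder.
Variable R : realType.
Local Notation C := R[i].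
Local Notation M2 := 'M[C]_(2, 2).
Local Notation M4 := 'M[C]_(4, 4).
Implicit Types (A B : M2) (Y : M4).

Lemma adj4_kron2 A B :
  adj4 (kron2 A B) = kron2 (map_mx Num.conj A)^T (map_mx Num.conj B)^T.
Proof. by apply/matrixP => i j; rewrite !mxE rmorphM. Qed.

Lemma adj2_sig_plus : (map_mx Num.conj (sig_plus R))^T = sig_minus R.
Proof.
apply/matrixP => i j; rewrite !mxE.
by case: i => [[|[|//]] ?]; case: j => [[|[|//]] ?] /=; rewrite ?conjC0 ?conjC1.
Qed.

Lemma adj2_sig_minus : (map_mx Num.conj (sig_minus R))^T = sig_plus R.
Proof.
apply/matrixP => i j; rewrite !mxE.
by case: i => [[|[|//]] ?]; case: j => [[|[|//]] ?] /=; rewrite ?conjC0 ?conjC1.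
Qed.

Lemma adj2_sig_z : (map_mx Num.conj (sig_z R))^T = sig_z R.
Proof.
apply/matrixP => i j; rewrite !mxE.
by case: i => [[|[|//]] ?]; case: j => [[|[|//]] ?] /=;
  rewrite ?conjC0 ?conjC1 ?conjCN1.
Qed.

Lemma adj2_1 : (map_mx Num.conj (1%:M : M2))^T = 1%:M.
Proof. by rewrite map_mx1 trmx1. Qed.

Lemma adj4_sp j : adj4 (sp R j) = sm R j.
Proof.
by rewrite /sp /sm; case: ifP => _; rewrite adj4_kron2 ?adj2_sig_plus adj2_1.
Qed.

Lemma adj4_sm j : adj4 (sm R j) = sp R j.
Proof.
by rewrite /sp /sm; case: ifP => _; rewrite adj4_kron2 ?adj2_sig_minus adj2_1.
Qed.

Lemma adj4_Wm j : adj4 (Wm R j) = Wm R j.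
Proof. by rewrite /Wm; case: ifP => _; rewrite adj4_kron2 ?adj2_sig_z adj2_1. Qed.

Lemma kron2_mul A1 B1 A2 B2 :
  kron2 A1 B1 *m kron2 A2 B2 = kron2 (A1 *m A2) (B1 *m B2).
Proof. exact: (@tensmx_mul _ 2 2 2 2 2 2). Qed.

Lemma kron2Dl A1 A2 B : kron2 (A1 + A2) B = kron2 A1 B + kron2 A2 B.
Proof. by apply/matrixP => i j; rewrite !mxE mulrDl. Qed.

Lemma kron2Dr A B1 B2 : kron2 A (B1 + B2) = kron2 A B1 + kron2 A B2.
Proof. by apply/matrixP => i j; rewrite !mxE mulrDr. Qed.

Lemma kron2_1 : kron2 (1%:M : M2) 1%:M = 1%:M.
Proof.
(* Index 'M_4 through the tensor index of 'I_(2 * 2). *)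
apply/matrixP => i j; move: i j.
change (forall i j : 'I_(2 * 2),
  (kron2 (1%:M : M2) 1%:M) i j = (1%:M : 'M[C]_(2 * 2)) i j) => i j.
case: (mxtens_indexP i) => i0 i1; case: (mxtens_indexP j) => j0 j1.
rewrite /kron2 (tensmxE (1%:M : M2) (1%:M : M2)) !mxE.
rewrite (inj_eq (can_inj (@mxtens_indexK _ _))) xpair_eqE.
by case: eqP; case: eqP; rewrite /= ?mulr1 ?mulr0 ?mul0r.
Qed.

Lemma sig_plus_minus_add :
  sig_plus R *m sig_minus R + sig_minus R *m sig_plus R = 1%:M.
Proof.
apply/matrixP => i j; rewrite !mxE !big_ord_recr !big_ord0 /= !mxE.
by case: i => [[|[|//]] ?]; case: j => [[|[|//]] ?] /=;
  rewrite ?mulr0 ?mul0r ?mulr1 ?addr0 ?add0r.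
Qed.

Lemma sp_sm_add j : sp R j *m sm R j + sm R j *m sp R j = 1%:M.
Proof.
rewrite /sp /sm; case: ifP => _; rewrite !kron2_mul !mulmx1.
  by rewrite -kron2Dl sig_plus_minus_add kron2_1.
by rewrite -kron2Dr sig_plus_minus_add kron2_1.
Qed.

Lemma acomm_sm_sp j Y :
  acomm (sm R j *m sp R j) Y = 2%:R *: Y - acomm (sp R j *m sm R j) Y.
Proof.
apply/eqP; rewrite eq_sym subr_eq addrC; apply/eqP.
rewrite /acomm addrACA -mulmxDl -mulmxDr sp_sm_add mul1mx mulmx1.
by rewrite -[Y in Y + Y]scale1r -scalerDl.
Qed.

Lemma dissipator_pair_add j Y :
  (2%:R *: (sm R j *m Y *m sp R j) - acomm (sp R j *m sm R j) Y)
  + (2%:R *: (sp R j *m Y *m sm R j) - acomm (sm R j *m sp R j) Y) =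
  2%:R *: (sm R j *m Y *m sp R j) + 2%:R *: (sp R j *m Y *m sm R j)
  - 2%:R *: Y.
Proof.
rewrite acomm_sm_sp; move: (sm R j *m Y *m sp R j) (sp R j *m Y *m sm R j).
move: (acomm _ Y) => S P Q.
by apply/matrixP => a b; rewrite !mxE; ring.
Qed.

End Ladder.

Section Generators.
Variable R : realType.
Local Notation C := R[i].
Local Notation M4 := 'M[C]_(4, 4).
Variables (eps : R) (om La Om : 'I_2 -> R) (V : M4).
Hypothesis hermV : hermitian4 V.
Implicit Types (X Y : M4) (n : 'I_2 -> R).

Lemma Hc_hermitian u n : hermitian4 (Hc eps om La V u n).
Proof.
rewrite /hermitian4 /Hc /H0 !(raddfD (@adj4 R)) !(raddf_sum (@adj4 R)) /=.
rewrite adj4Z conj_rC hermV.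
by congr (_ + _ + _); apply: eq_bigr => j _; rewrite adj4Z conj_rC adj4_Wm.
Qed.

Lemma LDdag_adjoint n X Y : hs (LDdag Om n X) Y = hs X (LD Om n Y).
Proof.
rewrite /LDdag /LD hs_suml hs_sumr; apply: eq_bigr => j _.
have := hs_dissipator_adjoint (sp R j) X Y.
have := hs_dissipator_adjoint (sm R j) X Y.
by rewrite !adj4_sm !adj4_sp; exact: hs_adjoint_combination.
Qed.

Lemma adjoint_rhs_dual u n X Y :
  hs (adjoint_rhs eps om La Om V u n X) Y
  + hs X (master_rhs eps om La Om V u n Y) = 0.
Proof.
rewrite /adjoint_rhs /master_rhs hsBl hsZl hsZl hsDr hsZr hsZr.
rewrite conj_NiC conj_rC (hs_commL _ _ (Hc_hermitian u n)) LDdag_adjoint.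
by ring.
Qed.

(* The partial derivatives of [master_rhs] in u and in n_j; the switching
   functions are [Ku V X Y = Re (hs X (master_rhs_du Y))] and
   [Kn eps La Om j X Y = Re (hs X (master_rhs_dn j Y))]. *)
Definition master_rhs_du Y : M4 := (- iC R) *: comm V Y.

Definition master_rhs_dn j Y : M4 :=
  (- iC R) *: (rC (eps * La j) *: comm (Wm R j) Y)
  + rC (eps * Om j) *:
      (2%:R *: (sm R j *m Y *m sp R j) + 2%:R *: (sp R j *m Y *m sm R j)
       - 2%:R *: Y).

Lemma HcB u1 n1 u0 n0 :
  Hc eps om La V u1 n1 - Hc eps om La V u0 n0 =
  rC (u1 - u0) *: V + \sum_j rC (n1 j - n0 j) *: (rC (eps * La j) *: Wm R j).
Proof.
rewrite /Hc opprD addrACA [H0 om + _]addrC addrKA -sumrB -scalerBl addrC.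
congr (_ *: _ + _); first by rewrite !rCE -rmorphB.
apply: eq_bigr => j _; rewrite -scalerBl scalerA.
by rewrite [_ * n1 j]mulrC [_ * n0 j]mulrC rCB_mul.
Qed.

Lemma LDB n1 n0 Y :
  LD Om n1 Y - LD Om n0 Y =
  \sum_j rC (n1 j - n0 j) *:
    (rC (Om j) *: (2%:R *: (sm R j *m Y *m sp R j)
                  + 2%:R *: (sp R j *m Y *m sm R j) - 2%:R *: Y)).
Proof.
rewrite /LD -sumrB; apply: eq_bigr => j _; rewrite -dissipator_pair_add.
move: (_ - acomm (sp R j *m sm R j) Y) (_ - acomm (sm R j *m sp R j) Y) => A B.
rewrite opprD addrACA -!scalerBl scalerA scalerDr.
by congr (_ *: _ + _ *: _); rewrite !rCE -rmorphB -rmorphM; congr _%:C%C; ring.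
Qed.

Lemma master_rhsB u1 n1 u0 n0 Y :
  master_rhs eps om La Om V u1 n1 Y - master_rhs eps om La Om V u0 n0 Y =
  rC (u1 - u0) *: master_rhs_du Y
  + \sum_j rC (n1 j - n0 j) *: master_rhs_dn j Y.
Proof.
(* Matrices are generalized before each rewrite: otherwise keyed matching
   unfolds [LD], [comm] and the matrix operations and becomes very slow. *)
rewrite /master_rhs.
move: (LD Om n1 Y) (LD Om n0 Y) (LDB n1 n0 Y) => L1 L0 eL.
move: (commBl (Hc eps om La V u1 n1) (Hc eps om La V u0 n0) Y).
move: (comm (Hc eps om La V u1 n1) Y) (comm (Hc eps om La V u0 n0) Y).
move=> C1 C0 eC; rewrite opprD addrACA -!scalerBr -eC eL HcB.
rewrite commDl commZl comm_suml scalerDr scalerA mulrC -scalerA -addrA.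
congr (_ + _); rewrite !scaler_sumr -big_split; apply: eq_bigr => j _ /=.
rewrite !commZl /master_rhs_dn; move: (comm (Wm R j) Y) (_ - 2%:R *: Y) => P D.
by apply/matrixP => a b; rewrite !mxE !rCE !rmorphM /=; ring.
Qed.

Lemma Re_hs_master_rhsB u1 n1 u0 n0 X Y :
  complex.Re (hs X (master_rhs eps om La Om V u1 n1 Y
                   - master_rhs eps om La Om V u0 n0 Y)) =
  Ku V X Y * (u1 - u0) + \sum_j Kn eps La Om j X Y * (n1 j - n0 j).
Proof.
rewrite master_rhsB hsDr ReD hs_sumr; congr (_ + _).
  by rewrite hsZr Re_rCM mulrC.
by rewrite Re_sum; apply: eq_bigr => j _; rewrite hsZr Re_rCM mulrC.
Qed.

Lemma Re_adjoint_master_gap u1 n1 u0 n0 X Y1 Y0 :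
  complex.Re (hs (adjoint_rhs eps om La Om V u1 n1 X) (Y1 - Y0))
  + complex.Re (hs X (master_rhs eps om La Om V u1 n1 Y1
                      - master_rhs eps om La Om V u0 n0 Y0)) =
  Ku V X Y0 * (u1 - u0) + \sum_j Kn eps La Om j X Y0 * (n1 j - n0 j).
Proof.
(* Duality for the control (u1, n1) removes Y1; only the control change acts. *)
rewrite -Re_hs_master_rhsB -ReD.
move: (adjoint_rhs_dual u1 n1 X Y1) (adjoint_rhs_dual u1 n1 X Y0).
move: (adjoint_rhs eps om La Om V u1 n1 X) (master_rhs eps om La Om V u1 n1 Y1).
move: (master_rhs eps om La Om V u1 n1 Y0) (master_rhs eps om La Om V u0 n0 Y0).
move=> M10 M00 A M11 /eqP + /eqP; rewrite !addr_eq0 !hsBr => /eqP -> /eqP ->.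
by rewrite opprK addrACA addNr add0r.
Qed.

End Generators.

Section MatrixCalculus.
Variable R : realType.
Local Notation C := R[i].
Local Notation M4 := 'M[C]_(4, 4).
Implicit Types (X Y : R -> M4) (A : set R).

Lemma Re_hsE (P Q : M4) :
  complex.Re (hs P Q) =
  \sum_(a < 4) \sum_(b < 4) (complex.Re (P b a) * complex.Re (Q b a)
                            + complex.Im (P b a) * complex.Im (Q b a)).
Proof.
rewrite /hs /mxtrace Re_sum; apply: eq_bigr => a _.
by rewrite mxE Re_sum; apply: eq_bigr => b _; rewrite !mxE Re_conjM.
Qed.

Definition continuous_mx_on A X : Prop :=
  forall i j, {within A, continuous (fun t => complex.Re (X t i j))} /\
              {within A, continuous (fun t => complex.Im (X t i j))}.

Definition is_derive_mx (t : R) X (dX : M4) : Prop :=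
  forall i j,
    is_derive t 1 (fun s => complex.Re (X s i j)) (complex.Re (dX i j)) /\
    is_derive t 1 (fun s => complex.Im (X s i j)) (complex.Im (dX i j)).

Lemma within_continuous_sum A n (F : 'I_n -> R -> R) :
  (forall i, {within A, continuous (F i)}) ->
  {within A, continuous (fun t => \sum_(i < n) F i t)}.
Proof.
move=> cF x; rewrite -fct_sumE.
elim/big_ind: _ => // [|f g cf cg]; first exact: cst_continuous.
exact: continuousD.
Qed.

Lemma Re_mxB X Y i j :
  (fun t => complex.Re ((X t - Y t) i j))
  = (fun t => complex.Re (X t i j) - complex.Re (Y t i j)).
Proof. by apply/funext => t; rewrite !mxE ReB. Qed.

Lemma Im_mxB X Y i j :
  (fun t => complex.Im ((X t - Y t) i j))
  = (fun t => complex.Im (X t i j) - complex.Im (Y t i j)).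
Proof. by apply/funext => t; rewrite !mxE ImB. Qed.

Lemma continuous_mx_onB A X Y :
  continuous_mx_on A X -> continuous_mx_on A Y ->
  continuous_mx_on A (fun t => X t - Y t).
Proof.
move=> cX cY i j; rewrite Re_mxB Im_mxB.
by split=> x; apply: continuousB; [exact: (cX i j).1|exact: (cY i j).1|
  exact: (cX i j).2|exact: (cY i j).2].
Qed.

Lemma is_derive_mxB (t : R) X Y dX dY :
  is_derive_mx t X dX -> is_derive_mx t Y dY ->
  is_derive_mx t (fun s => X s - Y s) (dX - dY).
Proof.
move=> dX' dY' i j; rewrite Re_mxB Im_mxB !mxE ReB ImB.
by split; apply: is_deriveB; [exact: (dX' i j).1|exact: (dY' i j).1|
  exact: (dX' i j).2|exact: (dY' i j).2].
Qed.

Lemma is_derive_sum_fun (t : R) n (F : 'I_n -> R -> R) (dF : 'I_n -> R) :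
  (forall i, is_derive t 1 (F i) (dF i)) ->
  is_derive t 1 (fun s => \sum_(i < n) F i s) (\sum_(i < n) dF i).
Proof. by move=> dFi; rewrite -fct_sumE; exact: is_derive_sum. Qed.

Lemma continuous_Re_hs A X Y :
  continuous_mx_on A X -> continuous_mx_on A Y ->
  {within A, continuous (fun t => complex.Re (hs (X t) (Y t)))}.
Proof.
move=> cX cY; rewrite (funext (fun t => Re_hsE (X t) (Y t))).
apply: within_continuous_sum => a; apply: within_continuous_sum => b x.
exact: (continuousD (continuousM ((cX b a).1 x) ((cY b a).1 x))
                    (continuousM ((cX b a).2 x) ((cY b a).2 x))).
Qed.

Lemma is_derive_Re_hs (t : R) X Y dX dY :
  is_derive_mx t X dX -> is_derive_mx t Y dY ->
  is_derive t 1 (fun s => complex.Re (hs (X s) (Y s)))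
    (complex.Re (hs dX (Y t)) + complex.Re (hs (X t) dY)).
Proof.
move=> dX' dY'; rewrite (funext (fun s => Re_hsE (X s) (Y s))) !Re_hsE.
rewrite -big_split; apply: is_derive_sum_fun => a /=.
rewrite -big_split; apply: is_derive_sum_fun => b /=.
apply: is_derive_eq.
  exact: (is_deriveD (is_deriveM (dX' b a).1 (dY' b a).1)
                     (is_deriveM (dX' b a).2 (dY' b a).2)).
by rewrite /GRing.scale /=; ring.
Qed.

Lemma solves_onB (T : R) F1 F0 X1 X0 :
  solves_on T F1 X1 -> solves_on T F0 X0 ->
  solves_on T (fun t _ => F1 t (X1 t) - F0 t (X0 t)) (fun t => X1 t - X0 t).
Proof.
move=> [c1 [Z1 [fin1 d1]]] [c0 [Z0 [fin0 d0]]]; split.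
  exact: continuous_mx_onB.
exists (Z1 `|` Z0); split; first by rewrite finite_setU.
by move=> t tT tZ; apply: is_derive_mxB; [apply: d1|apply: d0] => // Zt;
  apply: tZ; [left|right].
Qed.

Lemma solves_on_Re_hs (T : R) F G X Y :
  solves_on T F X -> solves_on T G Y ->
  {within `[0, T], continuous (fun t => complex.Re (hs (X t) (Y t)))} /\
  exists Z : set R, finite_set Z /\
    forall t, 0 < t < T -> ~ Z t ->
      is_derive t 1 (fun s => complex.Re (hs (X s) (Y s)))
        (complex.Re (hs (F t (X t)) (Y t)) + complex.Re (hs (X t) (G t (Y t)))).
Proof.
move=> [cX [ZX [finX dX]]] [cY [ZY [finY dY]]]; split.
  exact: continuous_Re_hs.
exists (ZX `|` ZY); split; first by rewrite finite_setU.
by move=> t tT tZ; apply: is_derive_Re_hs; [apply: dX|apply: dY] => // Zt;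
  apply: tZ; [left|right].
Qed.

End MatrixCalculus.

Section Monotonicity.
Variable R : realType.
Variables (f g : R -> R).

Lemma ge0_is_derive_le_seq (s : seq R) (a b : R) : a <= b ->
  {within `[a, b], continuous f} ->
  (forall t, a < t < b -> t \notin s -> is_derive t 1 f (g t) /\ 0 <= g t) ->
  f a <= f b.
Proof.
elim: s a b => [|z s IH] a b ab cf dfg.
  case: (ltgtP a b) ab => // [{}ab _|-> _]; last exact: lexx.
  have dfg' x : x \in `]a, b[ -> is_derive x 1 f (g x) /\ 0 <= g x.
    by rewrite in_itv /= => xab; exact: dfg.
  rewrite -subr_ge0; have [c cab ->] := MVT ab (fun x xab => (dfg' x xab).1) cf.
  apply: mulr_ge0; first exact: (dfg' c cab).2.
  by rewrite subr_ge0 ltW.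
have notz t : t != z -> t \notin s -> t \notin z :: s.
  by move=> tz ts; rewrite in_cons negb_or tz.
have [/andP[az zb]|zab] := boolP (a < z < b); last first.
  apply: IH => // t tab ts; apply: dfg => //; apply: notz ts.
  by apply: contraNneq zab => <-.
apply: (@le_trans _ _ (f z)); apply: IH.
- exact: ltW.
- apply: continuous_subspaceW cf => x /=; rewrite !in_itv /= => /andP[-> xz].
  by rewrite (le_trans xz) // ltW.
- move=> t /andP[a_t tz] ts; apply: dfg; first by rewrite a_t (lt_trans tz zb).
  by apply: notz ts; rewrite lt_eqF.
- exact: ltW.
- apply: continuous_subspaceW cf => x /=; rewrite !in_itv /= => /andP[zx ->].
  by rewrite andbT (le_trans _ zx) // ltW.
- move=> t /andP[zt tb] ts; apply: dfg; first by rewrite tb (lt_trans az zt).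
  by apply: notz ts; rewrite gt_eqF.
Qed.

Variable Z : set R.
Hypothesis finZ : finite_set Z.

Lemma ge0_is_derive_le (a b : R) : a <= b ->
  {within `[a, b], continuous f} ->
  (forall t, a < t < b -> ~ Z t -> is_derive t 1 f (g t) /\ 0 <= g t) ->
  f a <= f b.
Proof.
move: finZ => /finite_fsetP[S ->] ab cf dfg.
apply: (@ge0_is_derive_le_seq (finmap.enum_fset S)) => // t tab tS.
by apply: dfg => // /= tS'; rewrite tS' in tS.
Qed.

Variables (a b : R).
Hypotheses (cf : {within `[a, b], continuous f})
  (dfg : forall t, a < t < b -> ~ Z t -> is_derive t 1 f (g t) /\ 0 <= g t).

Lemma ge0_is_derive_homo x y : a <= x -> x <= y -> y <= b -> f x <= f y.
Proof.
move=> ax xy yb; apply: ge0_is_derive_le => //.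
  apply: continuous_subspaceW cf => t /=; rewrite !in_itv /= => /andP[xt ty].
  by rewrite (le_trans ax xt) (le_trans ty yb).
move=> t /andP[xt ty]; apply: dfg.
by rewrite (le_lt_trans ax xt) (lt_le_trans ty yb).
Qed.

Lemma ge0_is_derive_eq0 : f a = f b -> forall t, a < t < b -> ~ Z t -> g t = 0.
Proof.
move=> fab t tab tZ; have [dft _] := dfg tab tZ.
have fcst : \forall s \near t, f s = cst (f a) s.
  have tin : t \in `]a, b[ by rewrite in_itv.
  apply: filterS (near_in_itvoo tin) => s; rewrite in_itv /= => /andP[a_s s_b].
  apply/eqP; rewrite eq_le.
  rewrite (ge0_is_derive_homo (lexx a) (ltW a_s) (ltW s_b)) /=.
  by rewrite fab (ge0_is_derive_homo (ltW a_s) (ltW s_b) (lexx b)).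
have dcst := near_eq_is_derive fcst dft.
by rewrite -(@derive_val _ _ _ _ _ _ _ dcst) derive_cst.
Qed.

Lemma ge0_is_derive_null : f a = f b ->
  forall E, E `<=` [set t | a <= t <= b /\ 0 < g t] -> lebesgue_measure E = 0%E.
Proof.
move=> fab E sE; apply/countable_lebesgue_measure0/finite_set_countable.
apply: (sub_finite_set sE).
apply: (@sub_finite_set _ _ (Z `|` [set a] `|` [set b])); last first.
  by rewrite !finite_setU; do !split => //; exact: finite_set1.
move=> t [/andP[a_t t_b] gt]; have [->|tNb] := eqVneq t b; first by right.
have [->|tNa] := eqVneq t a; first by left; right.
left; left; apply: contrapT => tZ; move: gt; rewrite ge0_is_derive_eq0 ?ltxx //.
by rewrite !lt_def tNa a_t eq_sym tNb t_b.
Qed.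

End Monotonicity.

Section Argmax.
Variable R : realType.
Implicit Types (A B : set R) (k x y : R).

Lemma argmax_mul_ge0 A k x y :
  argmax_on A (fun v => k * v) x -> A y -> 0 <= k * (x - y).
Proof. by move=> [_ xmax] Ay; rewrite mulrBr subr_ge0; exact: xmax. Qed.

Lemma argmax_mul_gt0 A k x y :
  argmax_on A (fun v => k * v) x -> A y -> k != 0 -> x != y ->
  0 < k * (x - y).
Proof.
move=> xmax Ay k0 xy; rewrite lt_def (argmax_mul_ge0 xmax Ay) andbT.
by rewrite mulf_neq0 // subr_eq0.
Qed.

Variables (n : nat) (A B : set R) (k x y : R) (ks xs ys : 'I_n -> R).
Hypotheses (xmax : argmax_on A (fun v => k * v) x) (Ay : A y)
  (xsmax : forall j, argmax_on B (fun v => ks j * v) (xs j))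
  (Bys : forall j, B (ys j)).

Lemma argmax_gain_ge0 : 0 <= k * (x - y) + \sum_j ks j * (xs j - ys j).
Proof.
apply: addr_ge0; first exact: argmax_mul_ge0 xmax Ay.
by apply: sumr_ge0 => j _; exact: argmax_mul_ge0 (xsmax j) (Bys j).
Qed.

Lemma argmax_gain_gt0 :
  (k != 0 /\ x != y) \/ (exists j, ks j != 0 /\ xs j != ys j) ->
  0 < k * (x - y) + \sum_j ks j * (xs j - ys j).
Proof.
have sum_ge0 : 0 <= \sum_j ks j * (xs j - ys j).
  by apply: sumr_ge0 => j _; exact: argmax_mul_ge0 (xsmax j) (Bys j).
case=> [[k0 xy]|[j [kj0 xyj]]].
  by apply: ltr_pwDl sum_ge0; exact: argmax_mul_gt0 xmax Ay k0 xy.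
apply: ltr_wpDl; first exact: argmax_mul_ge0 xmax Ay.
rewrite (bigD1 j) //=; apply: ltr_pwDl.
  exact: argmax_mul_gt0 (xsmax j) (Bys j) kj0 xyj.
by apply: sumr_ge0 => i _; exact: argmax_mul_ge0 (xsmax i) (Bys i).
Qed.

End Argmax.

Theorem proposition2 (R : realType)
  (eps : R) (om La Om : 'I_2 -> R) (V : 'M[R[i]]_(4, 4))
  (T mu nmax : R) (rho0 rhotarget : 'M[R[i]]_(4, 4))
  (u0 : R -> R) (n0 : 'I_2 -> R -> R) (rho_k : R -> 'M[R[i]]_(4, 4))
  (u1 : R -> R) (n1 : 'I_2 -> R -> R) (chi1 rho_k1 : R -> 'M[R[i]]_(4, 4)) :
  0 < eps -> (forall j, 0 < om j) -> (forall j, 0 < La j) ->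
  (forall j, 0 < Om j) -> hermitian4 V ->
  0 < T -> 0 < mu -> 0 < nmax ->
  density rho0 -> density rhotarget ->
  admissible T mu nmax u0 n0 ->
  master_solution eps om La Om V T rho0 u0 n0 rho_k ->
  admissible T mu nmax u1 n1 ->
  adjoint_solution eps om La Om V T rhotarget u1 n1 chi1 ->
  master_solution eps om La Om V T rho0 u1 n1 rho_k1 ->
  (forall t, 0 <= t <= T ->
     argmax_on [set v | `|v| <= mu]
       (fun v => Ku V (chi1 t) (rho_k t) * v) (u1 t) /\
     forall j, argmax_on [set v | 0 <= v <= nmax]
       (fun v => Kn eps La Om j (chi1 t) (rho_k t) * v) (n1 j t)) ->
  [/\ (forall t, 0 <= t <= T ->
         0 <= Ku V (chi1 t) (rho_k t) * (u1 t - u0 t)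
              + \sum_(j < 2) Kn eps La Om j (chi1 t) (rho_k t)
                               * (n1 j t - n0 j t)),
      J1 T rhotarget rho_k <= J1 T rhotarget rho_k1
    & ((0 < lebesgue_measure
            ([set t | 0 <= t <= T /\ u1 t <> u0 t /\
                      Ku V (chi1 t) (rho_k t) <> 0])%R)%E \/
       (exists j : 'I_2, (0 < lebesgue_measure
            ([set t | 0 <= t <= T /\ n1 j t <> n0 j t /\
                      Kn eps La Om j (chi1 t) (rho_k t) <> 0])%R)%E)) ->
      J1 T rhotarget rho_k < J1 T rhotarget rho_k1].
Proof.
move=> _ _ _ _ hV T0 _ _ _ [herm_tg _ _] [_ _ adm0] [rho_k0 sol_k] _
  [chiT sol_chi] [rho_k10 sol_k1] amax.
set K := fun t => Ku V (chi1 t) (rho_k t) * (u1 t - u0 t)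
  + \sum_(j < 2) Kn eps La Om j (chi1 t) (rho_k t) * (n1 j t - n0 j t).
have K_ge0 t : 0 <= t <= T -> 0 <= K t.
  move=> tT; have [[umax nmax1] [u0_mu n0_nmax]] := (amax t tT, adm0 t tT).
  exact: argmax_gain_ge0 umax u0_mu nmax1 n0_nmax.
set f := fun t => complex.Re (hs (chi1 t) (rho_k1 t - rho_k t)).
have [cf [Z [finZ df]]] := solves_on_Re_hs sol_chi (solves_onB sol_k1 sol_k).
have dfK t : 0 < t < T -> ~ Z t -> is_derive t 1 f (K t) /\ 0 <= K t.
  move=> tT tZ; split; last by apply: K_ge0; case/andP: tT => /ltW -> /ltW ->.
  by have := df t tT tZ; rewrite Re_adjoint_master_gap.
have f0 : f 0 = 0 by rewrite /f rho_k0 rho_k10 subrr /hs mulmx0 mxtrace0.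
have fT : f T = J1 T rhotarget rho_k1 - J1 T rhotarget rho_k.
  by rewrite /f chiT Re_hs_hermitianB.
have J1_le : J1 T rhotarget rho_k <= J1 T rhotarget rho_k1.
  have := ge0_is_derive_le (f := f) finZ (ltW T0) cf dfK.
  by rewrite f0 fT subr_ge0.
split=> // gain_pos; rewrite lt_neqAle J1_le andbT; apply/eqP => J1_eq.
have fT0 : f 0 = f T by rewrite f0 fT J1_eq subrr.
have null := ge0_is_derive_null (f := f) finZ cf dfK fT0.
case: gain_pos => [|[j]]; rewrite null ?ltxx // => t [tT [/eqP neq /eqP K_neq0]].
  have [[umax nmax1] [u0_mu n0_nmax]] := (amax t tT, adm0 t tT).
  by split=> //; apply: argmax_gain_gt0 umax u0_mu nmax1 n0_nmax _; left.
have [[umax nmax1] [u0_mu n0_nmax]] := (amax t tT, adm0 t tT).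
by split=> //; apply: argmax_gain_gt0 umax u0_mu nmax1 n0_nmax _; right; exists j.
Qed.
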